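(* Let $(X,d)$ be a bounded metric space and $\ell:X\to[0,+\infty)$ a bounded lower semicontinuous function with $\inf_X\ell=0$. For $\lambda\ge0$ let $u_\lambda$ denote the Perron solution of $(\mathcal{G}_\lambda)$. Then: (a) $u_\lambda\to u_0$ uniformly as $\lambda\to0$; (b) if $X$ is compact and $\alpha>0$, then $u_\lambda\to u_\alpha$ uniformly as $\lambda\to\alpha$.
   Context: Global slope: $G[u](x)=\sup_{y\neq x}\frac{(u(x)-u(y))_+}{d(x,y)}$ if $u(x)<+\infty$, $G[u](x)=+\infty$ otherwise. A solution of $(\mathcal{G}_\lambda)$ is a lower semicontinuous $u$ with $\inf_Xu=0$ and $\lambda u+G[u]=\ell$ on $X$; the Perron solution is the solution that is pointwise maximal among all solutions. *)

From mathcomp Require Import all_boot all_order all_algebra.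
From mathcomp Require Import all_classical all_reals.
From mathcomp Require Import ereal.
Set Implicit Arguments. Unset Strict Implicit. Unset Printing Implicit Defensive.
Import Order.TTheory GRing.Theory Num.Theory.
Local Open Scope classical_set_scope.
Local Open Scope ring_scope.

Definition is_metric (R : realType) (X : Type) (d : X -> X -> R) : Prop :=
  (forall x y, 0 <= d x y) /\
  (forall x y, d x y = 0 <-> x = y) /\
  (forall x y, d x y = d y x) /\
  (forall x y z, d x z <= d x y + d y z).

Definition metric_bounded (R : realType) (X : Type) (d : X -> X -> R) : Prop :=
  exists M : R, forall x y, d x y <= M.

Definition d_open (R : realType) (X : Type) (d : X -> X -> R) (A : set X) : Prop :=
  forall x, A x -> exists2 e : R, 0 < e & forall y, d x y < e -> A y.

Definition d_compact (R : realType) (X : Type) (d : X -> X -> R) : Prop :=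
  forall (I : Type) (U : I -> set X),
    (forall i, d_open d (U i)) -> (forall x, exists i, U i x) ->
    exists F : set I, finite_set F /\ forall x, exists2 i, F i & U i x.

Definition d_lsc (R : realType) (X : Type) (d : X -> X -> R) (u : X -> \bar R) : Prop :=
  forall x (a : R), (a%:E < u x)%E ->
    exists2 e : R, 0 < e & forall y, d x y < e -> (a%:E < u y)%E.

(* The supremum is taken together with 0 (all the
   quotients are >= 0, so this only fixes the value 0 on an empty index set). *)
Definition global_slope (R : realType) (X : Type) (d : X -> X -> R)
    (u : X -> \bar R) (x : X) : \bar R :=
  if u x == +oo%E then +oo%E
  else ereal_sup ([set 0%E] `|`
         [set (maxe (u x - u y) 0 * ((d x y)^-1)%:E)%E | y in [set y | y <> x]]).

Definition is_solution (R : realType) (X : Type) (d : X -> X -> R)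
    (ell : X -> R) (lam : R) (u : X -> \bar R) : Prop :=
  d_lsc d u /\ ereal_inf (range u) = 0%E /\
  forall x, (lam%:E * u x + global_slope d u x)%E = (ell x)%:E.

Definition is_perron_solution (R : realType) (X : Type) (d : X -> X -> R)
    (ell : X -> R) (lam : R) (u : X -> \bar R) : Prop :=
  is_solution d ell lam u /\
  forall v, is_solution d ell lam v -> forall x, (v x <= u x)%E.

Definition unif_conv_at (R : realType) (X : Type) (u : R -> X -> \bar R) (a : R) : Prop :=
  forall eps : R, 0 < eps -> exists2 delta : R, 0 < delta &
    forall lam : R, 0 <= lam -> `|lam - a| < delta ->
      forall x, (`|u lam x - u a x| < eps%:E)%E.

(* Call v : X -> R a subsolution of (G_lambda) if v >= 0, inf v = 0 and
   lambda v(x) + (v(x) - v(y)) / d(x,y) <= ell(x) for all y <> x.  Finite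
   solutions are subsolutions, and the Perron solution u_lambda is the
   supremum of all subsolutions: that supremum is again a subsolution, and a
   maximal subsolution solves the equation, since where the slope inequality
   were strict one could add a small cone, using the lower semicontinuity of
   ell.  If d <= D, then every subsolution satisfies v <= D ell.  A
   mu-subsolution is a lambda-subsolution for lambda <= mu, and dividing a
   lambda-subsolution by 1 + (mu - lambda) D gives a mu-subsolution.  Hence
   u_mu <= u_lambda <= (1 + (mu - lambda) D) u_mu, so
   |u_lambda - u_mu| <= |lambda - mu| D^2 sup ell: lambda |-> u_lambda is
   uniformly Lipschitz on [0, +oo), which gives (a) and (b) alike. *)

From mathcomp Require Import all_boot all_order all_algebra.
From mathcomp Require Import all_classical all_reals.
From mathcomp Require Import ereal.
From mathcomp Require Import ring lra.
Set Implicit Arguments. Unset Strict Implicit. Unset Printing Implicit Defensive.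
Import Order.TTheory GRing.Theory Num.Theory.
Local Open Scope classical_set_scope.
Local Open Scope ring_scope.

Section GlobalSlopeReal.
Variables (R : realType) (X : Type) (d : X -> X -> R) (w : X -> R).

Lemma global_slope_EFin x :
  global_slope d (EFin \o w) x =
  ereal_sup ([set 0%E] `|`
    [set (Num.max (w x - w y) 0 / d x y)%:E | y in [set y | y <> x]]).
Proof.
rewrite /global_slope /=; congr (ereal_sup (_ `|` _)).
by apply: eq_imagel => y _; rewrite -EFinB -EFin_max -EFinM.
Qed.

Lemma global_slope_ge0 x : (0 <= global_slope d (EFin \o w) x)%E.
Proof. by rewrite global_slope_EFin; apply: ereal_sup_ubound; left. Qed.

Lemma global_slope_ge x y : x <> y ->
  ((Num.max (w x - w y) 0 / d x y)%:E <= global_slope d (EFin \o w) x)%E.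
Proof.
move=> xy; rewrite global_slope_EFin; apply: ereal_sup_ubound; right.
by exists y => // yx; apply: xy.
Qed.

Lemma global_slope_le x c : 0 <= c ->
  (forall y, x <> y -> Num.max (w x - w y) 0 / d x y <= c) ->
  (global_slope d (EFin \o w) x <= c%:E)%E.
Proof.
move=> c0 wc; rewrite global_slope_EFin; apply: ge_ereal_sup.
by move=> _ [->|[y yx <-]]; rewrite lee_fin // wc // => xy; apply: yx.
Qed.

End GlobalSlopeReal.

Lemma ereal_inf_range_eq0_lt (R : realType) (X : Type) (f : X -> R) :
  ereal_inf (range (EFin \o f)) = 0%E -> forall e, 0 < e -> exists z, f z < e.
Proof.
move=> f_inf e e_gt0.
have /ereal_inf_lt[_ [z _ <-]] : (ereal_inf (range (EFin \o f)) < e%:E)%E.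
  by rewrite f_inf lte_fin.
by rewrite lte_fin; exists z.
Qed.

Lemma ereal_inf_range_eq0 (R : realType) (X : Type) (f : X -> R) :
  (forall x, 0 <= f x) -> (forall e, 0 < e -> exists z, f z < e) ->
  ereal_inf (range (EFin \o f)) = 0%E.
Proof.
move=> f_ge0 f_small; apply/le_anti/andP; split; last first.
  by apply: le_ereal_inf_tmp => _ [z _ <-]; rewrite lee_fin.
have inf_le z : (ereal_inf (range (EFin \o f)) <= (f z)%:E)%E.
  by apply: ereal_inf_lbound; exists z.
case E: (ereal_inf _) inf_le => [r| |] inf_le //.
- rewrite lee_fin leNgt; apply/negP => r_gt0.
  by have [z] := f_small r r_gt0; rewrite ltNge -lee_fin inf_le.
- by have [z _] := f_small 1 ltr01; have := inf_le z.
Qed.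

Section Subsolutions.
Variables (R : realType) (X : Type) (d : X -> X -> R) (ell : X -> R) (D : R).
Hypothesis d_metric : is_metric d.
Hypothesis ell_ge0 : forall x, 0 <= ell x.
Hypothesis d_le_D : forall x y, d x y <= D.
Hypothesis D_gt0 : 0 < D.
Hypothesis ell_lsc : d_lsc d (EFin \o ell).
Hypothesis ell_inf0 : ereal_inf (range (EFin \o ell)) = 0%E.

Lemma metric_gt0 x y : x <> y -> 0 < d x y.
Proof.
case: d_metric => d_ge0 [d_eq0 _] xy.
by rewrite lt_def d_ge0 andbT; apply/eqP => /d_eq0.
Qed.

Lemma metric_xx x : d x x = 0.
Proof. by case: d_metric => _ [d_eq0 _]; apply/d_eq0. Qed.

(* [subsol_le_ell] accounts for the 0 in the supremum defining [global_slope]. *)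
Record is_subsolution (lam : R) (v : X -> R) : Prop := {
  subsol_ge0 : forall x, 0 <= v x;
  subsol_le_ell : forall x, lam * v x <= ell x;
  subsol_slope : forall x y, x <> y -> lam * v x + (v x - v y) / d x y <= ell x;
  subsol_inf0 : forall e : R, 0 < e -> exists z, v z < e }.

Section FixedLambda.
Variables (lam : R) (v : X -> R).
Hypotheses (lam_ge0 : 0 <= lam) (v_subsol : is_subsolution lam v).

Lemma subsol_sub_le x y : v x - v y <= ell x * d x y.
Proof.
have [<-|xy] := pselect (x = y); first by rewrite subrr metric_xx mulr0.
have d_gt0 := metric_gt0 xy; rewrite -ler_pdivrMr //.
have := subsol_slope v_subsol xy; have : 0 <= lam * v x.
  by rewrite mulr_ge0 // (subsol_ge0 v_subsol).
lra.
Qed.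

Lemma subsol_le_D x : v x <= D * ell x.
Proof.
rewrite leNgt; apply/negP => vx_gt.
have [z vz_lt] : exists z, v z < v x - D * ell x.
  by apply: (subsol_inf0 v_subsol); rewrite subr_gt0.
have := subsol_sub_le x z; have := ler_wpM2l (ell_ge0 x) (d_le_D x z).
lra.
Qed.

Lemma subsol_lsc : d_lsc d (EFin \o v).
Proof.
move=> x a; rewrite lte_fin => a_lt.
have ell1_gt0 : 0 < ell x + 1 by have := ell_ge0 x; lra.
exists ((v x - a) / (ell x + 1)); first by rewrite divr_gt0 // subr_gt0.
move=> y; rewrite ltr_pdivlMr // lte_fin => dxy_lt.
have := subsol_sub_le x y; have := (proj1 d_metric) x y; nra.
Qed.

Lemma subsol_global_slope_le x :
  (global_slope d (EFin \o v) x <= (ell x - lam * v x)%:E)%E.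
Proof.
apply: global_slope_le => [|y xy]; first by have := subsol_le_ell v_subsol x; lra.
have := subsol_le_ell v_subsol x; have := subsol_slope v_subsol xy.
by case: (leP (v x - v y) 0) => _; rewrite ?mul0r; lra.
Qed.

End FixedLambda.

Lemma subsol_le_lambda (lam mu : R) v : 0 <= lam -> lam <= mu ->
  is_subsolution mu v -> is_subsolution lam v.
Proof.
move=> lam_ge0 lam_le [v_ge0 v_le v_slope v_inf]; split => // [x|x y xy].
- by have := v_le x; have := ler_wpM2r (v_ge0 x) lam_le; lra.
- by have := v_slope x y xy; have := ler_wpM2r (v_ge0 x) lam_le; lra.
Qed.

Lemma subsol_rescale (lam mu : R) v : 0 <= lam -> lam <= mu ->
  is_subsolution lam v ->
  is_subsolution mu (fun x => v x / (1 + (mu - lam) * D)).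
Proof.
move=> lam_ge0 lam_le v_subsol.
have mu_lam_ge0 : 0 <= mu - lam by rewrite subr_ge0.
have gap_ge0 : 0 <= (mu - lam) * D by rewrite mulr_ge0 // ltW.
set s := 1 + (mu - lam) * D; have s_gt0 : 0 < s by rewrite /s; lra.
have mu_v x : mu * v x <= lam * v x + (mu - lam) * D * ell x.
  have := ler_wpM2l mu_lam_ge0 (subsol_le_D lam_ge0 v_subsol x).
  by rewrite mulrA; lra.
case: (v_subsol) => v_ge0 v_le v_slope v_inf; split.
- by move=> x; rewrite divr_ge0 // ltW.
- move=> x; rewrite mulrA ler_pdivrMr // /s.
  by have := mu_v x; have := v_le x; have := ell_ge0 x; nra.
- move=> x y xy; have d_gt0 := metric_gt0 xy.
  have -> : mu * (v x / s) + (v x / s - v y / s) / d x y =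
            (mu * v x + (v x - v y) / d x y) / s.
    by field; rewrite !lt0r_neq0.
  rewrite ler_pdivrMr // /s.
  by have := mu_v x; have := v_slope x y xy; have := ell_ge0 x; nra.
- move=> e e_gt0; have [z vz_lt] := v_inf e e_gt0; exists z.
  by rewrite ltr_pdivrMr // /s; nra.
Qed.

Lemma subsol_max (lam k c : R) (W phi : X -> R) : 0 <= lam ->
  is_subsolution lam W -> 0 <= k -> 0 < c ->
  (forall x y, phi x - phi y <= k * d x y) ->
  (forall x, W x < phi x -> lam * phi x + k <= ell x /\ c <= ell x) ->
  is_subsolution lam (fun x => Num.max (W x) (phi x)).
Proof.
move=> lam_ge0 W_subsol k_ge0 c_gt0 phi_lip phi_ok.
case: (W_subsol) => W_ge0 W_le W_slope W_inf; split.
- by move=> x; rewrite le_max W_ge0.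
- move=> x; case: (ltP (W x) (phi x)) => [/phi_ok[]|_]; [lra|exact: W_le].
- move=> x y xy; have d_gt0 := metric_gt0 xy.
  have W_le_max : W y <= Num.max (W y) (phi y) by rewrite le_max lexx.
  have phi_le_max : phi y <= Num.max (W y) (phi y) by rewrite le_max lexx orbT.
  case: (ltP (W x) (phi x)) => [/phi_ok[phi_x _]|_].
  + suff : (phi x - Num.max (W y) (phi y)) / d x y <= k by lra.
    by rewrite ler_pdivrMr // mulrC; have := phi_lip x y; lra.
  + have := W_slope x y xy; suff : (W x - Num.max (W y) (phi y)) / d x y <=
      (W x - W y) / d x y by lra.
    by rewrite ler_pM2r ?invr_gt0 //; lra.
- move=> e e_gt0.
  have [z ell_z] : exists z, ell z < Num.min (e / D) c.
    by apply: ereal_inf_range_eq0_lt; rewrite // lt_min divr_gt0 ?c_gt0.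
  have [ell_z_e ell_z_c] : ell z < e / D /\ ell z < c.
    by move: ell_z; rewrite lt_min => /andP.
  exists z; have /max_idPl -> : phi z <= W z.
    by rewrite leNgt; apply/negP => /phi_ok[_]; lra.
  have := subsol_le_D lam_ge0 W_subsol z; move: ell_z_e.
  by rewrite ltr_pdivlMr // mulrC; lra.
Qed.

Lemma subsol_bump (lam g : R) (W : X -> R) x0 : 0 <= lam ->
  is_subsolution lam W -> 0 <= g -> (forall y, W x0 - W y <= g * d x0 y) ->
  g < ell x0 - lam * W x0 ->
  exists2 V, is_subsolution lam V & W x0 < V x0.
Proof.
move=> lam_ge0 W_subsol g_ge0 W_sub g_lt.
have [d_ge0 [_ [_ d_tri]]] := d_metric.
set gap := ell x0 - lam * W x0 - g; have gap_gt0 : 0 < gap by rewrite /gap; lra.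
have [r r_gt0 ell_near] : exists2 r : R, 0 < r &
    forall y, d x0 y < r -> ell x0 - gap / 4 < ell y.
  have /ell_lsc[r r_gt0 ell_near] : ((ell x0 - gap / 4)%:E < (EFin \o ell) x0)%E.
    by rewrite lte_fin; lra.
  by exists r => // y /ell_near; rewrite lte_fin.
have lam1_gt0 : 0 < lam + 1 by lra.
set delta := Num.min (gap / 4 / (lam + 1)) (gap * r / 4).
have delta_gt0 : 0 < delta by rewrite lt_min !divr_gt0 ?mulr_gt0.
have lam_delta : lam * delta <= gap / 4.
  have : delta <= gap / 4 / (lam + 1) by rewrite ge_min lexx.
  by rewrite ler_pdivlMr //; nra.
have delta_le : delta <= gap * r / 4 by rewrite ge_min lexx orbT.
(* The cone [phi] is raised by [delta] at x0, and is above W only within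
   distance r / 2 of x0, where ell > ell x0 - gap / 4. *)
set k := g + gap / 2; have k_ge0 : 0 <= k by rewrite /k; lra.
set phi := fun y => W x0 + delta - k * d x0 y.
exists (fun y => Num.max (W y) (phi y)); last first.
  by rewrite /phi metric_xx mulr0 subr0 lt_max ltrDl delta_gt0 orbT.
apply: (subsol_max (k := k) (c := gap / 2)) => //.
- by rewrite divr_gt0.
- move=> x y; rewrite /phi; have := ler_wpM2l k_ge0 (d_tri x0 x y); lra.
- move=> x; rewrite /phi => W_lt_phi.
  have d_lt : gap / 2 * d x0 x < delta.
    by move: W_lt_phi; rewrite /k; have := W_sub x; nra.
  have near_x0 : d x0 x < r.
    by rewrite ltNge; apply/negP => /(ler_wpM2l (ltW gap_gt0)); lra.
  have lam_kd : 0 <= lam * (k * d x0 x) by rewrite !mulr_ge0.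
  have lam_W0 : 0 <= lam * W x0 by rewrite mulr_ge0 // (subsol_ge0 W_subsol).
  have gap_eq : ell x0 = gap + g + lam * W x0 by rewrite /gap; lra.
  have k_eq : k = g + gap / 2 by [].
  by have := ell_near x near_x0; split; lra.
Qed.

Lemma maximal_subsol_solution (lam : R) (W : X -> R) : 0 <= lam ->
  is_subsolution lam W ->
  (forall V, is_subsolution lam V -> forall x, V x <= W x) ->
  is_solution d ell lam (EFin \o W).
Proof.
move=> lam_ge0 W_subsol W_max; split; first exact: (subsol_lsc lam_ge0 W_subsol).
split; first exact: ereal_inf_range_eq0 (subsol_ge0 W_subsol) (subsol_inf0 W_subsol).
move=> x; suff -> : global_slope d (EFin \o W) x = (ell x - lam * W x)%:E.
  by rewrite /= -EFinM -EFinD; congr EFin; ring.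
set G := global_slope _ _ x; have G_ge0 : (0 <= G)%E := global_slope_ge0 d W x.
apply/eqP; rewrite eq_le subsol_global_slope_le //= leNgt; apply/negP => G_lt.
have G_fin : G \is a fin_num by rewrite ge0_fin_numE // (lt_trans G_lt) ?ltry.
have [g G_eq] : exists g, G = g%:E by exists (fine G); rewrite fineK.
have g_ge0 : 0 <= g by rewrite -lee_fin -G_eq.
have W_sub y : W x - W y <= g * d x y.
  have [<-|xy] := pselect (x = y); first by rewrite subrr metric_xx mulr0.
  have := global_slope_ge d W xy; rewrite -/G G_eq lee_fin ler_pdivrMr ?metric_gt0 //.
  have : W x - W y <= Num.max (W x - W y) 0 by rewrite le_max lexx.
  lra.
have g_lt : g < ell x - lam * W x by rewrite -lte_fin -G_eq.
have [V V_subsol] := subsol_bump lam_ge0 W_subsol g_ge0 W_sub g_lt.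
by rewrite ltNge W_max.
Qed.

Definition sup_subsol (lam : R) (x : X) : R :=
  sup [set v x | v in is_subsolution lam].

Section SupSubsolution.
Variable lam : R.
Hypothesis lam_ge0 : 0 <= lam.

Lemma subsol0 : is_subsolution lam (fun _ => 0).
Proof.
split=> [x|x|x y _|e e_gt0]; rewrite ?mulr0 ?subrr ?mul0r ?addr0 //.
by have [z _] := ereal_inf_range_eq0_lt ell_inf0 ltr01; exists z.
Qed.

Lemma sup_subsol_ub v x : is_subsolution lam v -> v x <= sup_subsol lam x.
Proof.
move=> v_subsol; apply: ub_le_sup; last by exists v.
exists (D * ell x) => _ [w w_subsol <-]; exact: subsol_le_D w_subsol x.
Qed.

Lemma sup_subsol_le x b :
  (forall v, is_subsolution lam v -> v x <= b) -> sup_subsol lam x <= b.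
Proof.
move=> b_ub; apply: ge_sup; first by exists 0, (fun _ => 0); first exact: subsol0.
by move=> _ [v v_subsol <-]; exact: b_ub.
Qed.

Lemma sup_subsol_subsol : is_subsolution lam (sup_subsol lam).
Proof.
set W := sup_subsol lam.
have W_ge0 x : 0 <= W x by exact: (sup_subsol_ub x subsol0).
split => //.
- move=> x; have [->|lam_neq0] := eqVneq lam 0; first by rewrite mul0r.
  have lam_gt0 : 0 < lam by rewrite lt_neqAle eq_sym lam_neq0.
  rewrite mulrC -ler_pdivlMr //; apply: sup_subsol_le => v v_subsol.
  by rewrite ler_pdivlMr // mulrC (subsol_le_ell v_subsol).
- (* The slope condition reads v x * (lam + 1 / d x y) <= ell x + v y / d x y,
     which is monotone in v y. *)
  move=> x y xy; have inv_d_gt0 : 0 < (d x y)^-1 by rewrite invr_gt0 metric_gt0.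
  have c_gt0 : 0 < lam + (d x y)^-1 by rewrite ltr_wpDl.
  suff : W x * (lam + (d x y)^-1) <= ell x + W y / d x y by lra.
  rewrite -ler_pdivlMr //; apply: sup_subsol_le => v v_subsol.
  rewrite ler_pdivlMr //; have := subsol_slope v_subsol xy.
  by have := ler_wpM2r (ltW inv_d_gt0) (sup_subsol_ub y v_subsol); rewrite -/W; lra.
- move=> e e_gt0.
  have [z ell_z] := ereal_inf_range_eq0_lt ell_inf0 (divr_gt0 e_gt0 D_gt0).
  exists z; have : W z <= D * ell z by apply: sup_subsol_le => v /subsol_le_D; apply.
  by move: ell_z; rewrite ltr_pdivlMr // mulrC; lra.
Qed.

Lemma perron_ge_subsol u v x : is_perron_solution d ell lam u ->
  is_subsolution lam v -> ((v x)%:E <= u x)%E.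
Proof.
move=> [_ u_max] v_subsol.
have W_sol := maximal_subsol_solution lam_ge0 sup_subsol_subsol
  (fun v v_subsol x => sup_subsol_ub x v_subsol).
by apply: le_trans (u_max _ W_sol x); rewrite lee_fin sup_subsol_ub.
Qed.

End SupSubsolution.

Section Solutions.
Variables (lam : R) (u : X -> \bar R).
Hypotheses (lam_ge0 : 0 <= lam) (u_sol : is_solution d ell lam u).

Lemma solution_ge0 x : (0 <= u x)%E.
Proof. by case: u_sol => _ [<- _]; apply: ereal_inf_lbound; exists x. Qed.

Lemma solution_fin_num x : u x \is a fin_num.
Proof.
have [_ [_ /(_ x) u_eq]] := u_sol; move: (solution_ge0 x) u_eq.
rewrite /global_slope; case: (u x) => [r| |] //= _; rewrite addey //.
have : (0 <= lam%:E * +oo)%E by rewrite mule_ge0 // lee_fin.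
by case: (lam%:E * +oo)%E.
Qed.

Lemma solution_subsol : is_subsolution lam (fine \o u).
Proof.
set w := fine \o u.
have u_EFin : u = EFin \o w by apply: funext => x; rewrite /= fineK ?solution_fin_num.
have w_ge0 x : 0 <= w x by rewrite -lee_fin; move: (solution_ge0 x); rewrite u_EFin.
have [_ [w_inf w_eq]] := u_sol; rewrite u_EFin in w_inf w_eq.
have G_eq x : global_slope d (EFin \o w) x = (ell x - lam * w x)%:E.
  have := w_eq x; have := global_slope_ge0 d w x.
  case: (global_slope _ _ _) => [g| |] //= _.
  by rewrite -EFinM -EFinD => -[<-]; congr EFin; ring.
split => //.
- by move=> x; have := global_slope_ge0 d w x; rewrite G_eq lee_fin; lra.
- move=> x y xy; have := global_slope_ge d w xy; rewrite G_eq lee_fin.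
  suff : (w x - w y) / d x y <= Num.max (w x - w y) 0 / d x y by lra.
  by rewrite ler_pM2r ?invr_gt0 ?metric_gt0 // le_max lexx.
- exact: ereal_inf_range_eq0_lt w_inf.
Qed.

End Solutions.

Lemma perron_sub_le (lam mu : R) u v x : 0 <= lam -> lam <= mu ->
  is_perron_solution d ell lam u -> is_perron_solution d ell mu v ->
  0 <= fine (u x) - fine (v x) <= (mu - lam) * (D ^+ 2 * ell x).
Proof.
move=> lam_ge0 lam_le [u_sol u_max] [v_sol v_max].
have mu_ge0 := le_trans lam_ge0 lam_le.
have u_subsol := solution_subsol lam_ge0 u_sol.
have v_subsol := solution_subsol mu_ge0 v_sol.
have v_le_u : fine (v x) <= fine (u x).
  have := perron_ge_subsol lam_ge0 x (conj u_sol u_max)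
    (subsol_le_lambda lam_ge0 lam_le v_subsol).
  by rewrite -[u x]fineK ?(solution_fin_num lam_ge0 u_sol) // lee_fin.
have u_le_v : fine (u x) <= fine (v x) * (1 + (mu - lam) * D).
  have := perron_ge_subsol mu_ge0 x (conj v_sol v_max)
    (subsol_rescale lam_ge0 lam_le u_subsol).
  rewrite -[v x]fineK ?(solution_fin_num mu_ge0 v_sol) // lee_fin.
  by rewrite ler_pdivrMr // ltr_wpDr ?mulr_ge0 ?subr_ge0 // ltW.
have u_le := subsol_le_D lam_ge0 u_subsol x; rewrite /= in u_le.
have gap_ge0 : 0 <= (mu - lam) * D by rewrite mulr_ge0 ?subr_ge0 // ltW.
apply/andP; split; first by rewrite subr_ge0.
have := ler_wpM2l gap_ge0 (le_trans v_le_u u_le).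
by rewrite expr2; lra.
Qed.

Lemma perron_dist_le (lam mu : R) u v x : 0 <= lam -> 0 <= mu ->
  is_perron_solution d ell lam u -> is_perron_solution d ell mu v ->
  (`|u x - v x| <= (`|lam - mu| * (D ^+ 2 * ell x))%:E)%E.
Proof.
move=> lam_ge0 mu_ge0 u_perron v_perron.
rewrite -[u x]fineK ?(solution_fin_num lam_ge0 u_perron.1) //.
rewrite -[v x]fineK ?(solution_fin_num mu_ge0 v_perron.1) //.
rewrite -EFinB abse_EFin lee_fin.
wlog lam_le : lam mu u v lam_ge0 mu_ge0 u_perron v_perron / lam <= mu.
  move=> wlog_le; case: (leP lam mu) => [|/ltW mu_le]; first exact: wlog_le.
  by rewrite distrC (distrC lam); exact: wlog_le.
have /andP[uv_ge0 uv_le] := perron_sub_le x lam_ge0 lam_le u_perron v_perron.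
by rewrite ger0_norm // distrC ger0_norm // subr_ge0.
Qed.

End Subsolutions.

Lemma lipschitz_unif_conv_at (R : realType) (X : Type) (u : R -> X -> \bar R) (K : R) :
  0 <= K ->
  (forall lam mu x, 0 <= lam -> 0 <= mu ->
    (`|u lam x - u mu x| <= (K * `|lam - mu|)%:E)%E) ->
  forall a, 0 <= a -> unif_conv_at u a.
Proof.
move=> K_ge0 u_lip a a_ge0 eps eps_gt0.
have K1_gt0 : 0 < K + 1 by lra.
exists (eps / (K + 1)) => [|lam lam_ge0 lam_near x]; first by rewrite divr_gt0.
apply: le_lt_trans (u_lip _ _ x lam_ge0 a_ge0) _; rewrite lte_fin.
move: lam_near; rewrite ltr_pdivlMr // => lam_near.
by have := normr_ge0 (lam - a); nra.
Qed.

Unset Implicit Arguments. Set Strict Implicit.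

Theorem corollary5p6 (R : realType) (X : Type) (d : X -> X -> R) (ell : X -> R)
  (u : R -> X -> \bar R) :
  is_metric d -> metric_bounded d ->
  (forall x, 0 <= ell x) -> (exists M : R, forall x, ell x <= M) ->
  d_lsc d (fun x => (ell x)%:E) -> ereal_inf (range (fun x => (ell x)%:E)) = 0%E ->
  (forall lam : R, 0 <= lam -> is_perron_solution d ell lam (u lam)) ->
  unif_conv_at u 0 /\
  (d_compact d -> forall alpha : R, 0 < alpha -> unif_conv_at u alpha).
Proof.
move=> d_metric [D0 d_le_D0] ell_ge0 [M ell_le_M] ell_lsc ell_inf0 u_perron.
pose D := Num.max D0 1.
have d_le_D x y : d x y <= D by rewrite le_max d_le_D0.
have D_gt0 : 0 < D by rewrite lt_max ltr01 orbT.
suff u_conv a : 0 <= a -> unif_conv_at u a.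
  by split=> [|_ alpha /ltW]; exact: u_conv.
apply: (@lipschitz_unif_conv_at _ _ _ (D ^+ 2 * Num.max M 0)) => [|lam mu x lam_ge0 mu_ge0].
  by rewrite mulr_ge0 ?sqr_ge0 // le_max lexx orbT.
apply: le_trans (perron_dist_le d_metric ell_ge0 d_le_D D_gt0 ell_lsc ell_inf0 x
  lam_ge0 mu_ge0 (u_perron _ lam_ge0) (u_perron _ mu_ge0)) _.
by rewrite lee_fin mulrC ler_wpM2r // ler_wpM2l ?sqr_ge0 // le_max ell_le_M.
Qed.
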